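(* Let $K=(\mathbb{V},U,\mathbb{F},\succ)$ be a circuit and, for $i\in\{1,2\}$, let $A_i=(\mathbb{V}_i^A,U,\mathbb{F}_i^A,\succ)$ be $\eta$-faithful interpretations of $K$ and $\Pi_i$ alignment classes mapping $K$'s variables onto $A_i$'s variables. Suppose $A_2$ is an abstraction of $A_1$ through an alignment $\pi_{2,1}$ and $A_1$ is an abstraction of $A_2$ through an alignment $\pi_{1,2}$. If $\pi_{2,1}\circ\Pi_1\subseteq\Pi_2$ and $\pi_{1,2}\circ\Pi_2\subseteq\Pi_1$, then $\Pi_1^{-1}(A_1)=\Pi_2^{-1}(A_2)$, so $d_{\mathrm{interp}}(A_1,A_2)=0$ (i.e. $A_1,A_2$ are $0$-interpretively equivalent).
   Context: A deterministic causal model is $(\mathbb{V},U,\mathbb{F},\succ)$ with hidden variables $\mathbb{V}$, input $U$, functions $\mathbb{F}$, partial order $\succ$, and $v_k:=f_k(\mathrm{Pa}(v_k),U)$, $\mathrm{Pa}(v_k)\subseteq\{v:v\succ v_k\}$. Interventions $\mathrm{do}(v_k\leftarrow\tilde f)$ replace $v_k$'s equation; $\mathcal{I}(\mathbb{V})$ denotes interventions. $K'=(\tilde{\mathbb{V}},\tilde U,\tilde{\mathbb{F}},\cdot)$ abstracts $K$ through an alignment $\pi$ if $\pi:\mathrm{SubsetsOf}(\mathbb{V})\to\tilde{\mathbb{V}}$ is surjective, $\tilde v_k=\pi\big(\bigcup_{v_k\in\pi^{-1}(\tilde v_k)}f_k(\mathrm{Pa}(v_k),U)\big)$ for all $\tilde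 v_k$, and a surjection $\omega:\mathcal{I}(\mathbb{V})\to\mathcal{I}(\tilde{\mathbb{V}})$ satisfies $\pi(\mathrm{do}(v_k\leftarrow f))=\mathrm{do}(\pi(v_k)\leftarrow\omega(f))$. Compositions of alignments mean applying them successively; $\pi\circ\Pi=\{\pi\circ\pi':\pi'\in\Pi\}$. A circuit of a language model $h:\Sigma^*\to\mathbb{R}^{|\Sigma|}$ on $S\subseteq\Sigma^*$ is a causal model with $S$-valued input, real-vector hidden variables, and an output variable equal to $h$ on $S$. An $\eta$-faithful interpretation $A$ of $K$ is a causal model abstracting $K$ whose output variable is within $\eta$ of $K$'s on $S$. For an alignment class $\Pi$, $\Pi^{-1}(A)$ (the implementations of $A$) is the set of $F$ such that $A$ is an $\eta$-faithful interpretation of $(\mathbb{V},U,F,\succ_F)$ under some $\pi\in\Pi$. With a pseudometric $d(F,F')=d(\mathbb{V}^F(S),\mathbb{V}^{F'}(S))$ on implementations, $d_{\mathrm{interp}}(A_1,A_2)$ is the Hausdorff distance between $\Pi_1^{-1}(A_1)$ and $\Pi_2^{-1}(A_2)$; $A_1,A_2$ are $\epsilon$-approximately interpretively equivalent if $d_{\mathrm{interp}}(A_1,A_2)<\epsilon$. *)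

From mathcomp Require Import all_boot all_order all_algebra.
Set Implicit Arguments.
Unset Strict Implicit.
Unset Printing Implicit Defensive.
Import Order.TTheory GRing.Theory Num.Theory.
Local Open Scope ring_scope.

(* A mechanism (F, >) on the finite variable set V (variable v takes values in
   [val v]) with input of type In.  [mprec w v] means  w > v ; it is a strict
   partial order and f_v only depends on the variables w > v (Pa(v) <= {w | w > v}). *)
Record mechanism (V : finType) (val : V -> Type) (In : Type) := Mechanism {
  mfun : forall v : V, (forall w, val w) -> In -> val v;
  mprec : V -> V -> Prop;
  mprec_irr : forall v, ~ mprec v v;
  mprec_trans : forall a b c, mprec a b -> mprec b c -> mprec a c;
  mfun_parents : forall v (x y : forall w, val w) u,
    (forall w, mprec w v -> x w = y w) -> mfun v x u = mfun v y u }.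

(* Interventions I(V): None is the empty intervention,
   Some (v; f) is do(v <- f). *)
Definition intervention (V : Type) (val : V -> Type) (In : Type) :=
  option {v : V & (forall w, val w) -> In -> val v}.

Definition itarget (V : Type) (val : V -> Type) (In : Type)
  (i : intervention val In) : option V :=
  match i with Some (existT v _) => Some v | None => None end.

Definition solves (V : finType) (val : V -> Type) (In : Type)
  (M : mechanism val In) (i : intervention val In) (u : In)
  (x : forall w, val w) : Prop :=
  (forall v, itarget i != Some v -> x v = mfun M v x u) /\
  (match i with Some (existT w f) => x w = f x u | None => True end).

(* An alignment: [avar] sends each low-level variable to the high-level variable
   (if any) whose subset pi^{-1} it belongs to; [aval w] computes the value of w
   from the values of the low-level variables. *)
Record alignment (V : Type) (val : V -> Type) (W : Type) (wal : W -> Type) :=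
  Alignment {
  avar : V -> option W;
  aval : forall w, (forall v, val v) -> wal w }.

Definition align_comp (V W X : Type) (val : V -> Type) (wal : W -> Type)
  (xal : X -> Type) (p2 : alignment wal xal) (p1 : alignment val wal) :
  alignment val xal :=
  Alignment (fun v => obind (avar p2) (avar p1 v))
            (fun x a => aval p2 x (fun w => aval p1 w a)).

Definition abstracts (V W : finType) (val : V -> Type) (wal : W -> Type)
  (In : Type) (Ml : mechanism val In) (Mh : mechanism wal In)
  (p : alignment val wal) : Prop :=
  (forall w, exists v, avar p v = Some w) /\
  (forall w (x y : forall v, val v),
     (forall v, avar p v = Some w -> x v = y v) -> aval p w x = aval p w y) /\
  (* a surjective omega on interventions with pi(do(v<-f)) = do(pi(v)<-omega(f)) *)
  exists omega : intervention val In -> intervention wal In,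
    (forall j, exists i, omega i = j) /\
    (forall i, itarget (omega i) = obind (avar p) (itarget i)) /\
    (forall i u x, solves Ml i u x -> solves Mh (omega i) u (fun w => aval p w x)).

Definition input (Sigma : finType) (S : seq Sigma -> Prop) := {u : seq Sigma | S u}.

(* Value types of models with an output variable (None) valued in R^|Sigma|. *)
Definition out_val (Sigma : finType) (R : Type) (W : Type) (wal : W -> Type)
  (o : option W) : Type :=
  match o with None => 'rV[R]_#|Sigma| | Some w => wal w end.

Definition circ_val (Sigma : finType) (R : Type) (H : Type) (dim : H -> nat) :=
  @out_val Sigma R H (fun v => 'rV[R]_(dim v)).

Definition circuit_of (Sigma : finType) (R : realFieldType) (S : seq Sigma -> Prop)
  (h : seq Sigma -> 'rV[R]_#|Sigma|) (H : finType) (dim : H -> nat)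
  (K : mechanism (circ_val Sigma R dim) (input S)) : Prop :=
  forall u x, solves K None u x -> x None = h (proj1_sig u).

Definition within (R : realFieldType) (n : nat) (eta : R) (a b : 'rV[R]_n) : Prop :=
  forall j, `|a 0 j - b 0 j| <= eta.

Definition faithful_interp (Sigma : finType) (R : realFieldType)
  (S : seq Sigma -> Prop) (h : seq Sigma -> 'rV[R]_#|Sigma|) (eta : R)
  (H : finType) (dim : H -> nat) (W : finType) (wal : W -> Type)
  (K : mechanism (circ_val Sigma R dim) (input S))
  (A : mechanism (out_val Sigma R wal) (input S))
  (p : alignment (circ_val Sigma R dim) (out_val Sigma R wal)) : Prop :=
  circuit_of h K /\ abstracts K A p /\
  (forall u y, solves A None u y -> within eta (y None) (h (proj1_sig u))).

Definition implementations (Sigma : finType) (R : realFieldType)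
  (S : seq Sigma -> Prop) (h : seq Sigma -> 'rV[R]_#|Sigma|) (eta : R)
  (H : finType) (dim : H -> nat) (W : finType) (wal : W -> Type)
  (Pi : alignment (circ_val Sigma R dim) (out_val Sigma R wal) -> Prop)
  (A : mechanism (out_val Sigma R wal) (input S))
  (F : mechanism (circ_val Sigma R dim) (input S)) : Prop :=
  exists p, Pi p /\ faithful_interp h eta F A p.

From mathcomp Require Import all_boot all_order all_algebra.

Set Implicit Arguments.
Unset Strict Implicit.
Unset Printing Implicit Defensive.

(* Abstraction is transitive along composed alignments, so an implementation F
   of A1 through p becomes an implementation of A2 through pi21 o p, which lies
   in Pi2 by hypothesis; the eta-closeness of the output is a property of A2
   alone, witnessed by A2 being a faithful interpretation of K.  The converse
   inclusion is symmetric. *)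

Lemma abstracts_comp (V W X : finType) (val : V -> Type) (wal : W -> Type)
  (xal : X -> Type) (In : Type) (M1 : mechanism val In) (M2 : mechanism wal In)
  (M3 : mechanism xal In) (p : alignment val wal) (q : alignment wal xal) :
  abstracts M1 M2 p -> abstracts M2 M3 q -> abstracts M1 M3 (align_comp q p).
Proof.
move=> [surj_p [local_p [om [surj_om [tgt_om sol_om]]]]].
move=> [surj_q [local_q [om' [surj_om' [tgt_om' sol_om']]]]].
split.
  move=> x; have [w qw] := surj_q x; have [v pv] := surj_p w.
  by exists v => /=; rewrite pv /= qw.
split.
  move=> x a b eq_ab /=; apply: local_q => w qw; apply: local_p => v pv.
  by apply: eq_ab => /=; rewrite pv /= qw.
exists (om' \o om); split.
  move=> j; have [k <-] := surj_om' j; have [i <-] := surj_om k.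
  by exists i.
split; first by move=> i /=; rewrite tgt_om' tgt_om; case: (itarget i).
by move=> i u x /sol_om /sol_om'.
Qed.

Section Implementations.

Variables (Sigma : finType) (R : realFieldType) (S : seq Sigma -> Prop).
Variables (h : seq Sigma -> 'rV[R]_#|Sigma|) (eta : R).
Variables (H : finType) (dim : H -> nat).
Variables (W1 W2 : finType) (wal1 : W1 -> Type) (wal2 : W2 -> Type).
Variables (A1 : mechanism (out_val Sigma R wal1) (input S))
          (A2 : mechanism (out_val Sigma R wal2) (input S)).
Variable q : alignment (out_val Sigma R wal1) (out_val Sigma R wal2).

Hypothesis A2_faithful_output :
  forall u y, solves A2 None u y -> within eta (y None) (h (proj1_sig u)).
Hypothesis A1_to_A2 : abstracts A1 A2 q.

Lemma faithful_interp_comp (F : mechanism (circ_val Sigma R dim) (input S)) p :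
  faithful_interp h eta F A1 p -> faithful_interp h eta F A2 (align_comp q p).
Proof.
move=> [F_circuit [F_to_A1 _]]; split=> //; split=> //.
exact: abstracts_comp F_to_A1 A1_to_A2.
Qed.

Lemma implementations_comp
    (Pi1 : alignment (circ_val Sigma R dim) (out_val Sigma R wal1) -> Prop)
    (Pi2 : alignment (circ_val Sigma R dim) (out_val Sigma R wal2) -> Prop) :
  (forall p, Pi1 p -> Pi2 (align_comp q p)) ->
  forall F, implementations h eta Pi1 A1 F -> implementations h eta Pi2 A2 F.
Proof.
move=> Pi12 F [p [Pi1p Fp]]; exists (align_comp q p).
by split; [exact: Pi12 | exact: faithful_interp_comp].
Qed.

End Implementations.

Theorem propositionF5 (Sigma : finType) (R : realFieldType)
  (S : seq Sigma -> Prop) (h : seq Sigma -> 'rV[R]_#|Sigma|) (eta : R)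
  (H : finType) (dim : H -> nat)
  (K : mechanism (circ_val Sigma R dim) (input S))
  (W1 : finType) (wal1 : W1 -> Type)
  (A1 : mechanism (out_val Sigma R wal1) (input S))
  (W2 : finType) (wal2 : W2 -> Type)
  (A2 : mechanism (out_val Sigma R wal2) (input S))
  (Pi1 : alignment (circ_val Sigma R dim) (out_val Sigma R wal1) -> Prop)
  (Pi2 : alignment (circ_val Sigma R dim) (out_val Sigma R wal2) -> Prop)
  (p21 : alignment (out_val Sigma R wal1) (out_val Sigma R wal2))
  (p12 : alignment (out_val Sigma R wal2) (out_val Sigma R wal1)) :
  (exists p1, faithful_interp h eta K A1 p1) ->
  (exists p2, faithful_interp h eta K A2 p2) ->
  abstracts A1 A2 p21 ->
  abstracts A2 A1 p12 ->
  (forall p, Pi1 p -> Pi2 (align_comp p21 p)) ->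
  (forall p, Pi2 p -> Pi1 (align_comp p12 p)) ->
  forall F, implementations h eta Pi1 A1 F <-> implementations h eta Pi2 A2 F.
Proof.
move=> [_ [_ [_ A1_output]]] [_ [_ [_ A2_output]]] A1_to_A2 A2_to_A1 Pi12 Pi21 F.
split; first apply: (implementations_comp A2_output A1_to_A2 Pi12).
apply: (implementations_comp A1_output A2_to_A1 Pi21).
Qed.
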